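(* Let $\Omega\subseteq\mathbb{R}^3$ be a domain and let $f=f_0+f_1e_1+f_2e_2\colon\Omega\to\mathbb{R}^3$ be monogenic, i.e. $\overline{\partial} f=0$. Then \[ \overline{\partial}(\overline{x}f+f\overline{x})\overline{\partial}=4\,\overline{\partial} f_0,\qquad \overline{\partial}(|x|^2f)\overline{\partial}=-2\,\overline{f}. \]
   Context: $\mathbb{H}$ denotes the real quaternions with basis $e_0=1,e_1,e_2,e_3$ and $e_1^2=e_2^2=e_3^2=e_1e_2e_3=-1$; $\mathbb{R}^3$ is identified with the reduced quaternions $x=x_0+x_1e_1+x_2e_2$, with conjugate $\overline{x}=x_0-x_1e_1-x_2e_2$ and $|x|^2=x_0^2+x_1^2+x_2^2$; similarly $\overline{f}=f_0-f_1e_1-f_2e_2$. With $\partial_i=\partial/\partial x_i$, for $\mathbb{H}$-valued $g$: $\overline{\partial} g=\partial_0 g+e_1\partial_1 g+e_2\partial_2 g$ (left action), $g\overline{\partial}=\partial_0 g+(\partial_1 g)e_1+(\partial_2 g)e_2$ (right action), and $\overline{\partial} g\overline{\partial}:=\overline{\partial}(g\overline{\partial})$. Products such as $\overline{x}f$ are quaternion products. *)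

From Stdlib Require Import Reals.
From Coquelicot Require Import Coquelicot.
Open Scope R_scope.

(* Real quaternions a0 + a1 e1 + a2 e2 + a3 e3, with e1^2=e2^2=e3^2=e1e2e3=-1
   (hence e1e2 = e3, e2e3 = e1, e3e1 = e2). *)
Record quat := Quat { q0 : R; q1 : R; q2 : R; q3 : R }.

Definition qadd (a b : quat) : quat :=
  Quat (q0 a + q0 b) (q1 a + q1 b) (q2 a + q2 b) (q3 a + q3 b).
Definition qscal (r : R) (a : quat) : quat :=
  Quat (r * q0 a) (r * q1 a) (r * q2 a) (r * q3 a).
Definition qmul (a b : quat) : quat :=
  Quat (q0 a * q0 b - q1 a * q1 b - q2 a * q2 b - q3 a * q3 b)
       (q0 a * q1 b + q1 a * q0 b + q2 a * q3 b - q3 a * q2 b)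
       (q0 a * q2 b - q1 a * q3 b + q2 a * q0 b + q3 a * q1 b)
       (q0 a * q3 b + q1 a * q2 b - q2 a * q1 b + q3 a * q0 b).
Definition qzero : quat := Quat 0 0 0 0.
Definition e1 : quat := Quat 0 1 0 0.
Definition e2 : quat := Quat 0 0 1 0.
Definition qconj (a : quat) : quat := Quat (q0 a) (- q1 a) (- q2 a) (- q3 a).
Definition red (a b c : R) : quat := Quat a b c 0.

Definition pt := (R * R * R)%type.
Definition c0 (x : pt) : R := fst (fst x).
Definition c1 (x : pt) : R := snd (fst x).
Definition c2 (x : pt) : R := snd x.

Definition shift (x : pt) (i : nat) (t : R) : pt :=
  match i with
  | 0%nat => (c0 x + t, c1 x, c2 x)
  | 1%nat => (c0 x, c1 x + t, c2 x)
  | _ => (c0 x, c1 x, c2 x + t)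
  end.

Definition pdR (i : nat) (g : pt -> R) (x : pt) : R :=
  Derive (fun t => g (shift x i t)) 0.
Definition ex_pdR (i : nat) (g : pt -> R) (x : pt) : Prop :=
  ex_derive (fun t => g (shift x i t)) 0.

Definition pdH (i : nat) (g : pt -> quat) (x : pt) : quat :=
  Quat (pdR i (fun y => q0 (g y)) x) (pdR i (fun y => q1 (g y)) x)
       (pdR i (fun y => q2 (g y)) x) (pdR i (fun y => q3 (g y)) x).

Definition dbarL (g : pt -> quat) (x : pt) : quat :=
  qadd (pdH 0 g x) (qadd (qmul e1 (pdH 1 g x)) (qmul e2 (pdH 2 g x))).
Definition dbarR (g : pt -> quat) (x : pt) : quat :=
  qadd (pdH 0 g x) (qadd (qmul (pdH 1 g x) e1) (qmul (pdH 2 g x) e2)).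
Definition dbarLR (g : pt -> quat) (x : pt) : quat := dbarL (dbarR g) x.

Definition xq (x : pt) : quat := red (c0 x) (c1 x) (c2 x).
Definition xbar (x : pt) : quat := qconj (xq x).
Definition norm2 (x : pt) : R := c0 x ^ 2 + c1 x ^ 2 + c2 x ^ 2.

Definition connected3 (D : pt -> Prop) : Prop :=
  forall U V : pt -> Prop, open U -> open V ->
    (forall x, D x -> U x \/ V x) ->
    (exists x, D x /\ U x) -> (exists x, D x /\ V x) ->
    exists x, D x /\ U x /\ V x.
Definition domain3 (D : pt -> Prop) : Prop :=
  (exists x, D x) /\ open D /\ connected3 D.

Definition C2_on (D : pt -> Prop) (g : pt -> R) : Prop :=
  forall x, D x ->
    continuous g x /\
    (forall i, (i < 3)%nat ->
       ex_pdR i g x /\ continuous (pdR i g) x /\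
       (forall j, (j < 3)%nat ->
          ex_pdR j (pdR i g) x /\ continuous (pdR j (pdR i g)) x)).

(* f = f0 + f1 e1 + f2 e2 : D -> R^3 is monogenic: C^2 (in fact monogenic
   functions are real analytic) and dbar f = 0 on D. *)
Definition monogenic (D : pt -> Prop) (f0 f1 f2 : pt -> R) : Prop :=
  C2_on D f0 /\ C2_on D f1 /\ C2_on D f2 /\
  forall x, D x -> dbarL (fun y => red (f0 y) (f1 y) (f2 y)) x = qzero.

(* Write eps_0 = 1, eps_1 = e1, eps_2 = e2, so that dbar g = sum_i eps_i d_i g and
   g dbar = sum_i d_i g eps_i.  For a reduced-quaternion-valued f the two differ only in
   the sign of the e3-component, so a monogenic f also satisfies f dbar = 0.  By the
   Leibniz rule, (|x|^2 f) dbar = |x|^2 (f dbar) + 2 f x = 2 f x near the point, and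
   dbar (f x) = (dbar f) x + sum_j eps_j f eps_j = -conj f.  Similarly
   (conj x f + f conj x) dbar = 4 f + 2 f0 + sum_i (d_i f) (conj x) eps_i near the point;
   applying dbar, the first-order terms give 4 dbar f0, and the second-order term
   sum_(i,j) eps_j (d_j d_i f) (conj x) eps_i vanishes because d_j d_i f = d_i d_j f
   (Schwarz) and sum_j eps_j d_i d_j f = d_i (dbar f) = 0. *)

From Pilot Require Import Defs.
From Stdlib Require Import Reals Lra Lia.
From Coquelicot Require Import Coquelicot.
Open Scope R_scope.

Lemma quat_eq (a b : quat) :
  q0 a = q0 b -> q1 a = q1 b -> q2 a = q2 b -> q3 a = q3 b -> a = b.
Proof. destruct a, b; cbn; intros -> -> -> ->; reflexivity. Qed.

(* As [shift], [eps] treats every index [i >= 2] as the last coordinate. *)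
Definition eps (i : nat) : quat :=
  match i with 0%nat => Quat 1 0 0 0 | 1%nat => e1 | _ => e2 end.

Definition qsum3 (h : nat -> quat) : quat := qadd (h 0%nat) (qadd (h 1%nat) (h 2%nat)).

Definition qre (a : quat) : quat := red (q0 a) 0 0.

(* [cbn] reduces each projection as soon as it unfolds a product; [unfold] would
   duplicate the factors of nested products exponentially.  [lra] then treats the
   nonlinear monomials as atoms, which decides these identities much faster than [ring]. *)
Ltac qsimpl :=
  apply quat_eq;
  cbn [qsum3 qre eps xbar xq qadd qmul qscal qconj qzero red e1 e2 q0 q1 q2 q3];
  try unfold norm2.

Ltac qlra := qsimpl; lra.

Lemma qsum3_ext h k : (forall i, (i < 3)%nat -> h i = k i) -> qsum3 h = qsum3 k.
Proof. intros H; unfold qsum3; rewrite !H by lia; reflexivity. Qed.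

(* [Defs.c1] is shadowed by Coquelicot's [c1]. *)
Lemma pt_eq (p q : pt) : c0 p = c0 q -> Defs.c1 p = Defs.c1 q -> c2 p = c2 q -> p = q.
Proof. destruct p as [[p0 p1] p2], q as [[r0 r1] r2]; cbn; intros -> -> ->; reflexivity. Qed.

Lemma shift0 (p : pt) (i : nat) : shift p i 0 = p.
Proof.
  destruct p as [[p0 p1] p2], i as [|[|i]]; apply pt_eq; unfold shift, c0, Defs.c1, c2; cbn;
    ring.
Qed.

Lemma shift_shift (p : pt) (i : nat) (s t : R) : shift (shift p i s) i t = shift p i (s + t).
Proof.
  destruct p as [[p0 p1] p2], i as [|[|i]]; apply pt_eq; unfold shift, c0, Defs.c1, c2; cbn;
    ring.
Qed.

Lemma shift_comm (p : pt) (i j : nat) (s t : R) :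
  shift (shift p i s) j t = shift (shift p j t) i s.
Proof.
  destruct p as [[p0 p1] p2], i as [|[|i]], j as [|[|j]]; apply pt_eq;
    unfold shift, c0, Defs.c1, c2; cbn; ring.
Qed.

Lemma locally_2d_shift (P : pt -> Prop) (x : pt) (i j : nat) :
  locally x P -> locally_2d (fun s t => P (shift (shift x i s) j t)) 0 0.
Proof.
  intros [d Hd]; exists (pos_div_2 d); cbn; intros s t Hs Ht; apply Hd.
  destruct x as [[p0 p1] p2], i as [|[|i]], j as [|[|j]];
    repeat split; unfold shift, c0, Defs.c1, c2; cbn;
    unfold AbsRing_ball, abs, minus, plus, opp; cbn; split_Rabs; lra.
Qed.

Lemma locally_shift (P : pt -> Prop) (x : pt) (i : nat) :
  locally x P -> locally 0 (fun t => P (shift x i t)).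
Proof.
  intros HP; destruct (locally_2d_shift P x i i HP) as [d Hd]; exists d; intros t Ht.
  specialize (Hd 0 t); rewrite shift0 in Hd; apply Hd; [|exact Ht].
  rewrite Rminus_0_r, Rabs_R0; apply cond_pos.
Qed.

Lemma Derive_shift (h : pt -> R) (p : pt) (i : nat) (s : R) :
  Derive (fun z => h (shift p i z)) s = pdR i h (shift p i s).
Proof.
  unfold pdR, Derive; f_equal; apply Lim_ext; intros t.
  rewrite !shift_shift, Rplus_0_l, Rplus_0_r; reflexivity.
Qed.

Lemma ex_derive_shift (h : pt -> R) (p : pt) (i : nat) (s : R) :
  ex_pdR i h (shift p i s) -> ex_derive (fun z => h (shift p i z)) s.
Proof.
  intros H.
  apply (ex_derive_ext (fun z => h (shift (shift p i s) i (z - s)))).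
  { intros z; rewrite shift_shift; f_equal; f_equal; ring. }
  apply (ex_derive_comp (fun t => h (shift (shift p i s) i t)) (fun z => z - s)).
  - rewrite Rminus_diag; exact H.
  - apply (ex_derive_minus (fun z => z) (fun _ => s));
      [apply ex_derive_id | apply ex_derive_const].
Qed.

Lemma continuity_2d_pt_shift (h : pt -> R) (x : pt) (i j : nat) :
  continuous h x -> continuity_2d_pt (fun s t => h (shift (shift x i s) j t)) 0 0.
Proof.
  intros Hh eps; rewrite !shift0.
  apply (locally_2d_shift (fun z => Rabs (h z - h x) < eps)).
  exact (Hh _ (locally_ball (h x) eps)).
Qed.

Lemma Derive_shift_comm (h : pt -> R) (x : pt) (i j : nat) (s t : R) :
  Derive (fun s' => h (shift (shift x i s') j t)) s = pdR i h (shift (shift x i s) j t).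
Proof.
  rewrite shift_comm, <- Derive_shift.
  apply Derive_ext; intros s'; rewrite shift_comm; reflexivity.
Qed.

Lemma ex_derive_shift_comm (h : pt -> R) (x : pt) (i j : nat) (s t : R) :
  ex_pdR i h (shift (shift x i s) j t) -> ex_derive (fun s' => h (shift (shift x i s') j t)) s.
Proof.
  rewrite shift_comm; intros H.
  apply (ex_derive_ext (fun s' => h (shift (shift x j t) i s'))), ex_derive_shift, H.
  intros s'; rewrite shift_comm; reflexivity.
Qed.

Lemma pdR_comm (u : pt -> R) (x : pt) (i j : nat) :
  locally x (fun y => ex_pdR i u y /\ ex_pdR j u y /\
                      ex_pdR i (pdR j u) y /\ ex_pdR j (pdR i u) y) ->
  continuous (pdR i (pdR j u)) x -> continuous (pdR j (pdR i u)) x ->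
  pdR i (pdR j u) x = pdR j (pdR i u) x.
Proof.
  intros Hex Hij Hji.
  set (q s t := shift (shift x i s) j t).
  assert (Di : forall h s t, Derive (fun s' => h (q s' t)) s = pdR i h (q s t))
    by (intros; apply Derive_shift_comm).
  assert (Dj : forall h s t, Derive (fun t' => h (q s t')) t = pdR j h (q s t))
    by (intros; apply Derive_shift).
  change (Derive (fun s => Derive (fun t => u (q s t)) 0) 0 = pdR j (pdR i u) x).
  transitivity (Derive (fun t => Derive (fun s => u (q s t)) 0) 0).
  2:{ apply Derive_ext; intros t; apply Derive_ext; intros s; unfold q; rewrite shift_comm;
      reflexivity. }
  apply (Schwarz (fun s t => u (q s t))).
  - apply (locally_2d_impl (fun s t => ex_pdR i u (q s t) /\ ex_pdR j u (q s t) /\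
                              ex_pdR i (pdR j u) (q s t) /\ ex_pdR j (pdR i u) (q s t))).
    + apply locally_2d_forall; intros s t (Hi & Hj & Hij' & Hji'); repeat split.
      * exact (ex_derive_shift_comm u x i j s t Hi).
      * apply ex_derive_shift, Hj.
      * apply (ex_derive_ext (fun s' => pdR j u (q s' t))); [intros; symmetry; apply Dj|].
        exact (ex_derive_shift_comm _ x i j s t Hij').
      * apply (ex_derive_ext (fun t' => pdR i u (q s t'))); [intros; symmetry; apply Di|].
        apply ex_derive_shift, Hji'.
    + apply (locally_2d_shift (fun y => ex_pdR i u y /\ ex_pdR j u y /\
                                        ex_pdR i (pdR j u) y /\ ex_pdR j (pdR i u) y)), Hex.
  - apply (continuity_2d_pt_ext (fun s t => pdR i (pdR j u) (q s t))).
    + intros s t; rewrite <- Di; apply Derive_ext; intros s'; symmetry; apply Dj.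
    + apply continuity_2d_pt_shift, Hij.
  - apply (continuity_2d_pt_ext (fun s t => pdR j (pdR i u) (q s t))).
    + intros s t; rewrite <- Dj; apply Derive_ext; intros t'; symmetry; apply Di.
    + apply continuity_2d_pt_shift, Hji.
Qed.

Lemma C2_on_ex_pdR (D : pt -> Prop) (u : pt -> R) (y : pt) (i : nat) :
  C2_on D u -> D y -> (i < 3)%nat -> ex_pdR i u y.
Proof. intros Hu Hy Hi; exact (proj1 (proj2 (Hu y Hy) i Hi)). Qed.

Lemma C2_on_ex_pdR2 (D : pt -> Prop) (u : pt -> R) (y : pt) (i j : nat) :
  C2_on D u -> D y -> (i < 3)%nat -> (j < 3)%nat -> ex_pdR i (pdR j u) y.
Proof. intros Hu Hy Hi Hj; exact (proj1 (proj2 (proj2 (proj2 (Hu y Hy) j Hj)) i Hi)). Qed.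

Lemma C2_on_pdR_comm (D : pt -> Prop) (u : pt -> R) (x : pt) (i j : nat) :
  open D -> C2_on D u -> D x -> (i < 3)%nat -> (j < 3)%nat ->
  pdR i (pdR j u) x = pdR j (pdR i u) x.
Proof.
  intros HD Hu Hx Hi Hj; apply pdR_comm.
  - apply (filter_imp D); [|exact (HD x Hx)]; intros y Hy.
    repeat split; eauto using C2_on_ex_pdR, C2_on_ex_pdR2.
  - exact (proj2 (proj2 (proj2 (proj2 (Hu x Hx) j Hj)) i Hi)).
  - exact (proj2 (proj2 (proj2 (proj2 (Hu x Hx) i Hi)) j Hj)).
Qed.

Definition is_pdR (i : nat) (u : pt -> R) (y : pt) (l : R) : Prop :=
  is_derive (fun t => u (shift y i t)) 0 l.

Lemma is_pdR_unique i u y l : is_pdR i u y l -> pdR i u y = l.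
Proof. apply is_derive_unique. Qed.

Lemma ex_pdR_is i u y : ex_pdR i u y -> is_pdR i u y (pdR i u y).
Proof. apply Derive_correct. Qed.

Lemma is_pdR_ex i u y l : is_pdR i u y l -> ex_pdR i u y.
Proof. intros H; exists l; exact H. Qed.

Lemma is_pdR_loc i u v y l :
  locally y (fun z => u z = v z) -> is_pdR i v y l -> is_pdR i u y l.
Proof.
  intros Huv; apply is_derive_ext_loc.
  apply (locally_shift (fun z => v z = u z)).
  apply (filter_imp (fun z => u z = v z)); [intros z H; symmetry; exact H | exact Huv].
Qed.

Lemma pdR_loc i u v y : locally y (fun z => u z = v z) -> pdR i u y = pdR i v y.
Proof. intros Huv; apply Derive_ext_loc, (locally_shift (fun z => u z = v z)), Huv. Qed.

Lemma is_pdR_eq i u y l l' : is_pdR i u y l -> l = l' -> is_pdR i u y l'.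
Proof. intros H <-; exact H. Qed.

Lemma is_pdR_const i (r : R) y : is_pdR i (fun _ => r) y 0.
Proof. exact (is_derive_const r 0). Qed.

Lemma is_pdR_plus i u v y du dv :
  is_pdR i u y du -> is_pdR i v y dv -> is_pdR i (fun z => u z + v z) y (du + dv).
Proof. intros Hu Hv; exact (is_derive_plus _ _ _ _ _ Hu Hv). Qed.

Lemma is_pdR_minus i u v y du dv :
  is_pdR i u y du -> is_pdR i v y dv -> is_pdR i (fun z => u z - v z) y (du - dv).
Proof. intros Hu Hv; exact (is_derive_minus _ _ _ _ _ Hu Hv). Qed.

Lemma is_pdR_mult i u v y du dv :
  is_pdR i u y du -> is_pdR i v y dv ->
  is_pdR i (fun z => u z * v z) y (du * v y + u y * dv).
Proof.
  intros Hu Hv; unfold is_pdR.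
  replace (du * v y + u y * dv) with (du * v (shift y i 0) + u (shift y i 0) * dv)
    by now rewrite shift0.
  exact (is_derive_mult _ _ 0 du dv Hu Hv Rmult_comm).
Qed.

(* Syntax-directed, so that unification never unfolds [Rmult] or [Rplus]. *)
Ltac is_pdR_rules :=
  lazymatch goal with
  | |- is_pdR _ (fun z => @?u z + @?v z) _ _ => eapply (is_pdR_plus _ u v); is_pdR_rules
  | |- is_pdR _ (fun z => @?u z - @?v z) _ _ => eapply (is_pdR_minus _ u v); is_pdR_rules
  | |- is_pdR _ (fun z => @?u z * @?v z) _ _ => eapply (is_pdR_mult _ u v); is_pdR_rules
  | |- is_pdR _ (fun _ => ?r) _ _ => eapply is_pdR_const
  | |- _ => eassumption
  end.

Definition is_pdH (i : nat) (g : pt -> quat) (y : pt) (d : quat) : Prop :=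
  is_pdR i (fun z => q0 (g z)) y (q0 d) /\ is_pdR i (fun z => q1 (g z)) y (q1 d) /\
  is_pdR i (fun z => q2 (g z)) y (q2 d) /\ is_pdR i (fun z => q3 (g z)) y (q3 d).

Definition ex_pdH (i : nat) (g : pt -> quat) (y : pt) : Prop :=
  ex_pdR i (fun z => q0 (g z)) y /\ ex_pdR i (fun z => q1 (g z)) y /\
  ex_pdR i (fun z => q2 (g z)) y /\ ex_pdR i (fun z => q3 (g z)) y.

(* [split] would also split the conjunction hidden inside [is_derive]. *)
Ltac split4 := refine (conj _ (conj _ (conj _ _))).

Lemma is_pdH_unique i g y d : is_pdH i g y d -> pdH i g y = d.
Proof.
  intros (H0 & H1 & H2 & H3); unfold pdH.
  rewrite (is_pdR_unique _ _ _ _ H0), (is_pdR_unique _ _ _ _ H1),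
    (is_pdR_unique _ _ _ _ H2), (is_pdR_unique _ _ _ _ H3).
  destruct d; reflexivity.
Qed.

Lemma ex_pdH_is i g y : ex_pdH i g y -> is_pdH i g y (pdH i g y).
Proof.
  intros (H0 & H1 & H2 & H3); split4;
    [exact (ex_pdR_is _ _ _ H0) | exact (ex_pdR_is _ _ _ H1)
    | exact (ex_pdR_is _ _ _ H2) | exact (ex_pdR_is _ _ _ H3)].
Qed.

Lemma is_pdH_ex i g y d : is_pdH i g y d -> ex_pdH i g y.
Proof. intros (H0 & H1 & H2 & H3); split4; eapply is_pdR_ex; eassumption. Qed.

Lemma is_pdH_loc i g h y d :
  locally y (fun z => g z = h z) -> is_pdH i h y d -> is_pdH i g y d.
Proof.
  intros Hgh (H0 & H1 & H2 & H3);
    split4; (eapply is_pdR_loc; [|eassumption]);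
    apply (filter_imp _ _ (fun z (E : g z = h z) => f_equal _ E) Hgh).
Qed.

Lemma pdH_loc i g h y : locally y (fun z => g z = h z) -> pdH i g y = pdH i h y.
Proof.
  intros Hgh; unfold pdH; f_equal; apply pdR_loc;
    apply (filter_imp _ _ (fun z (E : g z = h z) => f_equal _ E) Hgh).
Qed.

Lemma is_pdH_eq i g y d d' : is_pdH i g y d -> d = d' -> is_pdH i g y d'.
Proof. intros H <-; exact H. Qed.

Lemma is_pdH_const i c y : is_pdH i (fun _ => c) y qzero.
Proof. split4; apply is_pdR_const. Qed.

Lemma is_pdH_add i g h y dg dh :
  is_pdH i g y dg -> is_pdH i h y dh ->
  is_pdH i (fun z => qadd (g z) (h z)) y (qadd dg dh).
Proof.
  intros (G0 & G1 & G2 & G3) (H0 & H1 & H2 & H3); split4; cbn [qadd q0 q1 q2 q3];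
    is_pdR_rules.
Qed.

Lemma is_pdH_scal i r g y d :
  is_pdH i g y d -> is_pdH i (fun z => qscal r (g z)) y (qscal r d).
Proof.
  intros (G0 & G1 & G2 & G3); split4; cbn [qscal q0 q1 q2 q3];
    (eapply is_pdR_eq; [is_pdR_rules|]); ring.
Qed.

Lemma is_pdH_mul i g h y dg dh :
  is_pdH i g y dg -> is_pdH i h y dh ->
  is_pdH i (fun z => qmul (g z) (h z)) y (qadd (qmul dg (h y)) (qmul (g y) dh)).
Proof.
  intros (G0 & G1 & G2 & G3) (H0 & H1 & H2 & H3); split4; cbn [qadd qmul q0 q1 q2 q3];
    (eapply is_pdR_eq; [is_pdR_rules|]); ring.
Qed.

Lemma is_pdH_mull i c g y d :
  is_pdH i g y d -> is_pdH i (fun z => qmul c (g z)) y (qmul c d).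
Proof.
  intros H; eapply is_pdH_eq; [apply (is_pdH_mul _ _ _ _ _ _ (is_pdH_const i c y) H)|].
  qlra.
Qed.

Lemma is_pdH_mulr i c g y d :
  is_pdH i g y d -> is_pdH i (fun z => qmul (g z) c) y (qmul d c).
Proof.
  intros H; eapply is_pdH_eq; [apply (is_pdH_mul _ _ _ _ _ _ H (is_pdH_const i c y))|].
  qlra.
Qed.

Lemma is_pdH_qsum3 i g y d :
  (forall j, (j < 3)%nat -> is_pdH i (g j) y (d j)) ->
  is_pdH i (fun z => qsum3 (fun j => g j z)) y (qsum3 d).
Proof. intros H; unfold qsum3; repeat apply is_pdH_add; apply H; lia. Qed.

Lemma is_pdH_qre i g y d : is_pdH i g y d -> is_pdH i (fun z => qre (g z)) y (qre d).
Proof.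
  intros (G0 & G1 & G2 & G3); split4; cbn [qre red q0 q1 q2 q3];
    [exact G0 | apply is_pdR_const ..].
Qed.

Lemma is_pdH_red (f0 f1 f2 : pt -> R) i y d0 d1 d2 :
  is_pdR i f0 y d0 -> is_pdR i f1 y d1 -> is_pdR i f2 y d2 ->
  is_pdH i (fun z => red (f0 z) (f1 z) (f2 z)) y (red d0 d1 d2).
Proof.
  intros H0 H1 H2; split4; cbn [red q0 q1 q2 q3];
    [exact H0 | exact H1 | exact H2 | apply is_pdR_const].
Qed.

Lemma is_pdH_xq i y : is_pdH i xq y (eps i).
Proof.
  destruct y as [[p0 p1] p2], i as [|[|i]];
    split4; unfold is_pdR, xq, red, shift, c0, Defs.c1, c2; cbn; auto_derive; auto; ring.
Qed.

Lemma is_pdH_xbar i y : is_pdH i xbar y (qconj (eps i)).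
Proof.
  destruct y as [[p0 p1] p2], i as [|[|i]];
    split4; unfold is_pdR, xbar, qconj, xq, red, shift, c0, Defs.c1, c2; cbn;
    auto_derive; auto; ring.
Qed.

Lemma pdH_red (f0 f1 f2 : pt -> R) i y :
  pdH i (fun z => red (f0 z) (f1 z) (f2 z)) y = red (pdR i f0 y) (pdR i f1 y) (pdR i f2 y).
Proof. unfold pdH, red; cbn [q0 q1 q2 q3]; f_equal; apply is_pdR_unique, is_pdR_const. Qed.

Lemma pdH2_red (f0 f1 f2 : pt -> R) i j y :
  pdH i (pdH j (fun z => red (f0 z) (f1 z) (f2 z))) y
  = red (pdR i (pdR j f0) y) (pdR i (pdR j f1) y) (pdR i (pdR j f2) y).
Proof.
  rewrite (pdH_loc _ _ (fun z => red (pdR j f0 z) (pdR j f1 z) (pdR j f2 z)))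
    by (apply filter_forall; intros z; apply pdH_red).
  apply pdH_red.
Qed.

Lemma dbarLE g y : dbarL g y = qsum3 (fun i => qmul (eps i) (pdH i g y)).
Proof. unfold dbarL; qlra. Qed.

Lemma dbarRE g y : dbarR g y = qsum3 (fun i => qmul (pdH i g y) (eps i)).
Proof. unfold dbarR; qlra. Qed.

Lemma dbarL_is g y d :
  (forall i, (i < 3)%nat -> is_pdH i g y (d i)) ->
  dbarL g y = qsum3 (fun i => qmul (eps i) (d i)).
Proof.
  intros H; rewrite dbarLE; unfold qsum3.
  rewrite (is_pdH_unique 0 g y (d 0%nat)), (is_pdH_unique 1 g y (d 1%nat)),
    (is_pdH_unique 2 g y (d 2%nat)) by (apply H; lia).
  reflexivity.
Qed.

Lemma dbarR_is g y d :
  (forall i, (i < 3)%nat -> is_pdH i g y (d i)) ->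
  dbarR g y = qsum3 (fun i => qmul (d i) (eps i)).
Proof.
  intros H; rewrite dbarRE; unfold qsum3.
  rewrite (is_pdH_unique 0 g y (d 0%nat)), (is_pdH_unique 1 g y (d 1%nat)),
    (is_pdH_unique 2 g y (d 2%nat)) by (apply H; lia).
  reflexivity.
Qed.

Lemma dbarL_loc g h y : locally y (fun z => g z = h z) -> dbarL g y = dbarL h y.
Proof.
  intros Hgh; rewrite !dbarLE; unfold qsum3; rewrite !(pdH_loc _ g h y Hgh); reflexivity.
Qed.

Lemma dbarL_scal r g y : dbarL (fun z => qscal r (g z)) y = qscal r (dbarL g y).
Proof.
  assert (E : forall i, pdH i (fun z => qscal r (g z)) y = qscal r (pdH i g y))
    by (intros i; unfold pdH, pdR; cbn [qscal q0 q1 q2 q3]; rewrite !Derive_scal;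
        reflexivity).
  rewrite !dbarLE; unfold qsum3; rewrite !E; qlra.
Qed.

Lemma dbarR_norm2_scal F y :
  (forall i, (i < 3)%nat -> ex_pdH i F y) ->
  dbarR (fun z => qscal (norm2 z) (F z)) y
  = qadd (qscal (norm2 y) (dbarR F y)) (qscal 2 (qmul (F y) (xq y))).
Proof.
  intros HF; rewrite (dbarRE F).
  erewrite dbarR_is.
  2:{ intros i Hi.
      apply (is_pdH_loc _ _ (fun z => qmul (qmul (xq z) (xbar z)) (F z)));
        [apply filter_forall; intros z; qlra|].
      apply is_pdH_mul; [apply is_pdH_mul; [apply is_pdH_xq | apply is_pdH_xbar]|].
      apply ex_pdH_is, HF, Hi. }
  qlra.
Qed.

Lemma dbarL_mul_xq F y :
  (forall i, (i < 3)%nat -> ex_pdH i F y) ->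
  dbarL (fun z => qmul (F z) (xq z)) y
  = qadd (qmul (dbarL F y) (xq y)) (qsum3 (fun j => qmul (qmul (eps j) (F y)) (eps j))).
Proof.
  intros HF; rewrite (dbarLE F).
  erewrite dbarL_is.
  2:{ intros i Hi; apply is_pdH_mul; [apply ex_pdH_is, HF, Hi | apply is_pdH_xq]. }
  qlra.
Qed.

Lemma dbarR_xbar_anticomm F y :
  (forall i, (i < 3)%nat -> ex_pdH i F y) ->
  dbarR (fun z => qadd (qmul (xbar z) (F z)) (qmul (F z) (xbar z))) y
  = qadd (qmul (xbar y) (dbarR F y))
      (qadd (qsum3 (fun i => qmul (qadd (qmul (qconj (eps i)) (F y))
                                         (qmul (F y) (qconj (eps i)))) (eps i)))
            (qsum3 (fun i => qmul (qmul (pdH i F y) (xbar y)) (eps i)))).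
Proof.
  intros HF; rewrite (dbarRE F).
  erewrite dbarR_is.
  2:{ intros i Hi; pose proof (ex_pdH_is _ _ _ (HF i Hi)) as HFi.
      apply is_pdH_add; apply is_pdH_mul;
        [apply is_pdH_xbar | exact HFi | exact HFi | apply is_pdH_xbar]. }
  qlra.
Qed.

Lemma sandwich_sym_eq0 (D : nat -> nat -> quat) (c : quat) :
  (forall i j, (i < 3)%nat -> (j < 3)%nat -> D i j = D j i) ->
  (forall i, (i < 3)%nat -> qsum3 (fun j => qmul (eps j) (D i j)) = qzero) ->
  qsum3 (fun j => qmul (eps j) (qsum3 (fun i => qmul (qmul (D j i) c) (eps i)))) = qzero.
Proof.
  intros Hsym HD.
  transitivity (qsum3 (fun i => qmul (qmul (qsum3 (fun j => qmul (eps j) (D i j))) c) (eps i))).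
  { unfold qsum3; rewrite (Hsym 1%nat 0%nat), (Hsym 2%nat 0%nat), (Hsym 2%nat 1%nat) by lia.
    qlra. }
  rewrite (qsum3_ext _ (fun _ => qzero)) by (intros i Hi; rewrite HD by exact Hi; qlra).
  qlra.
Qed.

Lemma anticomm_sum_reduced (a : nat -> quat) (D : nat -> nat -> quat) (c : quat) :
  (forall i, q3 (a i) = 0) ->
  qsum3 (fun j => qmul (eps j) (a j)) = qzero ->
  (forall i j, (i < 3)%nat -> (j < 3)%nat -> D i j = D j i) ->
  (forall i, (i < 3)%nat -> qsum3 (fun j => qmul (eps j) (D i j)) = qzero) ->
  qsum3 (fun j => qmul (eps j)
    (qadd (qadd (qscal 4 (a j)) (qscal 2 (qre (a j))))
          (qsum3 (fun i => qmul (qadd (qmul (D j i) c) (qmul (a i) (qconj (eps j))))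
                                (eps i)))))
  = qscal 4 (qsum3 (fun j => qmul (eps j) (qre (a j)))).
Proof.
  intros Ha Hmono Hsym HD.
  transitivity
    (qadd (qsum3 (fun j => qmul (eps j) (qsum3 (fun i => qmul (qmul (D j i) c) (eps i)))))
      (qsum3 (fun j => qmul (eps j)
        (qadd (qadd (qscal 4 (a j)) (qscal 2 (qre (a j))))
              (qsum3 (fun i => qmul (qmul (a i) (qconj (eps j))) (eps i))))))).
  { qlra. }
  rewrite sandwich_sym_eq0 by assumption.
  pose proof (f_equal q0 Hmono); pose proof (f_equal q1 Hmono);
    pose proof (f_equal q2 Hmono); pose proof (f_equal q3 Hmono).
  pose proof (Ha 0%nat); pose proof (Ha 1%nat); pose proof (Ha 2%nat).
  qsimpl; cbn [qsum3 eps qadd qmul qzero e1 e2 q0 q1 q2 q3] in *; lra.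
Qed.

Section Monogenic.

Variables (F : pt -> quat) (x : pt).
Hypothesis F_reduced : forall y, q3 (F y) = 0.
Hypothesis F_diff : locally x (fun y => forall i, (i < 3)%nat -> ex_pdH i F y).
Hypothesis F_monogenic : locally x (fun y => dbarL F y = qzero).

Lemma pdH_reduced i y : q3 (pdH i F y) = 0.
Proof.
  cbn [pdH q3]; rewrite (pdR_loc i _ (fun _ => 0)) by (apply filter_forall; exact F_reduced).
  apply is_pdR_unique, is_pdR_const.
Qed.

Lemma dbarR_monogenic : locally x (fun y => dbarR F y = qzero).
Proof.
  apply (filter_imp (fun y => dbarL F y = qzero)); [|exact F_monogenic].
  intros y Hy; rewrite dbarLE in Hy; rewrite dbarRE.
  pose proof (f_equal q0 Hy); pose proof (f_equal q1 Hy);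
    pose proof (f_equal q2 Hy); pose proof (f_equal q3 Hy).
  pose proof (pdH_reduced 0 y); pose proof (pdH_reduced 1 y); pose proof (pdH_reduced 2 y).
  qsimpl; cbn [qsum3 eps qadd qmul qzero e1 e2 q0 q1 q2 q3] in *; lra.
Qed.

Lemma dbarLR_norm2_scal :
  dbarLR (fun y => qscal (norm2 y) (F y)) x = qscal (-2) (qconj (F x)).
Proof.
  unfold dbarLR.
  rewrite (dbarL_loc _ (fun y => qscal 2 (qmul (F y) (xq y)))).
  - rewrite dbarL_scal, dbarL_mul_xq, (locally_singleton _ _ F_monogenic)
      by exact (locally_singleton _ _ F_diff).
    pose proof (F_reduced x); qlra.
  - apply (filter_imp (fun y => (forall i, (i < 3)%nat -> ex_pdH i F y) /\ dbarR F y = qzero)).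
    + intros y [Hd Hr]; rewrite dbarR_norm2_scal, Hr by exact Hd; qlra.
    + apply filter_and; [exact F_diff | exact dbarR_monogenic].
Qed.

Hypothesis F_twice : forall i j, (i < 3)%nat -> (j < 3)%nat -> ex_pdH i (pdH j F) x.
Hypothesis F_schwarz :
  forall i j, (i < 3)%nat -> (j < 3)%nat -> pdH i (pdH j F) x = pdH j (pdH i F) x.

Lemma pdH_dbarL_monogenic i :
  (i < 3)%nat -> qsum3 (fun j => qmul (eps j) (pdH i (pdH j F) x)) = qzero.
Proof.
  intros Hi.
  rewrite <- (is_pdH_unique i (fun y => dbarL F y) x qzero).
  - symmetry; apply is_pdH_unique.
    apply (is_pdH_loc _ _ (fun y => qsum3 (fun j => qmul (eps j) (pdH j F y))));
      [apply filter_forall; intros y; apply dbarLE|].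
    apply is_pdH_qsum3; intros j Hj; apply is_pdH_mull, ex_pdH_is, F_twice; assumption.
  - apply (is_pdH_loc _ _ (fun _ => qzero)); [exact F_monogenic | apply is_pdH_const].
Qed.

Lemma dbarLR_xbar_anticomm :
  dbarLR (fun y => qadd (qmul (xbar y) (F y)) (qmul (F y) (xbar y))) x
  = qscal 4 (dbarL (fun y => qre (F y)) x).
Proof.
  pose proof (locally_singleton _ _ F_diff) as Fdiff_x.
  unfold dbarLR.
  rewrite (dbarL_loc _ (fun y => qadd (qadd (qscal 4 (F y)) (qscal 2 (qre (F y))))
                           (qsum3 (fun i => qmul (qmul (pdH i F y) (xbar y)) (eps i))))).
  2:{ apply (filter_imp (fun y => (forall i, (i < 3)%nat -> ex_pdH i F y) /\
                                  dbarR F y = qzero)).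
      - intros y [Hd Hr]; rewrite dbarR_xbar_anticomm, Hr by exact Hd.
        pose proof (F_reduced y); qlra.
      - apply filter_and; [exact F_diff | exact dbarR_monogenic]. }
  erewrite dbarL_is.
  2:{ intros j Hj; pose proof (ex_pdH_is _ _ _ (Fdiff_x j Hj)) as HFj.
      apply is_pdH_add;
        [apply is_pdH_add; apply is_pdH_scal; [exact HFj | apply is_pdH_qre, HFj]|].
      apply is_pdH_qsum3; intros i Hi; apply is_pdH_mulr, is_pdH_mul;
        [apply ex_pdH_is, F_twice | apply is_pdH_xbar]; assumption. }
  rewrite (dbarL_is (fun y => qre (F y)) x (fun j => qre (pdH j F x)))
    by (intros j Hj; apply is_pdH_qre, ex_pdH_is, Fdiff_x, Hj).
  apply (anticomm_sum_reduced (fun i => pdH i F x) (fun i j => pdH i (pdH j F) x)).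
  - intros i; apply pdH_reduced.
  - rewrite <- dbarLE; exact (locally_singleton _ _ F_monogenic).
  - exact F_schwarz.
  - exact pdH_dbarL_monogenic.
Qed.

End Monogenic.

Section C2Reduced.

Variables (D : pt -> Prop) (f0 f1 f2 : pt -> R).
Hypotheses (C0 : C2_on D f0) (C1 : C2_on D f1) (C2 : C2_on D f2).

Lemma C2_on_red_ex_pdH y :
  D y -> forall i, (i < 3)%nat -> ex_pdH i (fun z => red (f0 z) (f1 z) (f2 z)) y.
Proof.
  intros Hy i Hi; eapply is_pdH_ex, is_pdH_red; apply ex_pdR_is;
    [exact (C2_on_ex_pdR D f0 y i C0 Hy Hi) | exact (C2_on_ex_pdR D f1 y i C1 Hy Hi)
    | exact (C2_on_ex_pdR D f2 y i C2 Hy Hi)].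
Qed.

Lemma C2_on_red_ex_pdH2 y :
  D y -> forall i j, (i < 3)%nat -> (j < 3)%nat ->
  ex_pdH i (pdH j (fun z => red (f0 z) (f1 z) (f2 z))) y.
Proof.
  intros Hy i j Hi Hj.
  apply (is_pdH_ex _ _ _ (red (pdR i (pdR j f0) y) (pdR i (pdR j f1) y) (pdR i (pdR j f2) y))).
  apply (is_pdH_loc _ _ (fun z => red (pdR j f0 z) (pdR j f1 z) (pdR j f2 z)));
    [apply filter_forall; intros z; apply pdH_red|].
  apply is_pdH_red; apply ex_pdR_is; eapply C2_on_ex_pdR2; eassumption.
Qed.

Lemma C2_on_red_pdH_comm y :
  open D -> D y -> forall i j, (i < 3)%nat -> (j < 3)%nat ->
  pdH i (pdH j (fun z => red (f0 z) (f1 z) (f2 z))) y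
  = pdH j (pdH i (fun z => red (f0 z) (f1 z) (f2 z))) y.
Proof.
  intros HD Hy i j Hi Hj; rewrite !pdH2_red.
  f_equal; apply (C2_on_pdR_comm D); assumption.
Qed.

End C2Reduced.

Theorem lemma4p3 (Omega : pt -> Prop) (f0 f1 f2 : pt -> R) :
  domain3 Omega ->
  monogenic Omega f0 f1 f2 ->
  forall x, Omega x ->
    dbarLR (fun y => qadd (qmul (xbar y) (red (f0 y) (f1 y) (f2 y)))
                          (qmul (red (f0 y) (f1 y) (f2 y)) (xbar y))) x
      = qscal 4 (dbarL (fun y => red (f0 y) 0 0) x)
    /\
    dbarLR (fun y => qscal (norm2 y) (red (f0 y) (f1 y) (f2 y))) x
      = qscal (-2) (qconj (red (f0 x) (f1 x) (f2 x))).
Proof.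
  intros (_ & HO & _) (C0 & C1 & C2 & Hm) x Hx.
  set (F := fun y => red (f0 y) (f1 y) (f2 y)).
  assert (F_reduced : forall y, q3 (F y) = 0) by reflexivity.
  assert (F_diff : locally x (fun y => forall i, (i < 3)%nat -> ex_pdH i F y))
    by exact (filter_imp _ _ (C2_on_red_ex_pdH Omega f0 f1 f2 C0 C1 C2) (HO x Hx)).
  assert (F_monogenic : locally x (fun y => dbarL F y = qzero))
    by exact (filter_imp _ _ Hm (HO x Hx)).
  split.
  - exact (dbarLR_xbar_anticomm F x F_reduced F_diff F_monogenic
             (C2_on_red_ex_pdH2 Omega f0 f1 f2 C0 C1 C2 x Hx)
             (C2_on_red_pdH_comm Omega f0 f1 f2 C0 C1 C2 x HO Hx)).
  - exact (dbarLR_norm2_scal F x F_reduced F_diff F_monogenic).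
Qed.
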